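(* Let $F$ be a rooted forest, let $U_1,U_2$ be a partition of $V(F)$ into convex subsets, and let $m_1,m_2\in\mathbb{N}_0$. Then $\mathrm{OPTZ}(F[U_1],m_1)+\mathrm{OPTZ}(F[U_2],m_2)\le\mathrm{OPTZ}(F,m_1+m_2)$.
   Context: A set $U\subseteq V(F)$ is convex if any two vertices of $U$ connected in $F$ are also connected in the induced subforest $F[U]$. A tree-sum data structure is initialized with a weighted rooted forest $(F,w)$ with weights in a commutative group $G$ (some vertices may be auxiliary: weight $0$, no operation applies to them) and processes online $\textsf{cut}(v)$ (delete the edge from $v$ to its parent; legal only if $v$ is not a root), $\textsf{update-weight}(v,x)$ and $\textsf{tree-sum}(v)$ (sum of weights of the tree of the current forest containing $v$), in the group model (group elements may only be added and subtracted, no other inspection; correct for every commutative group). An initial-zero tree-sum data structure is one that only accepts initial forests in which all weights are zero. $\mathrm{OPTZ}(F,m)$ is the minimum, over initial-zero tree-sum data structures $D$, of the maximum number of group additions and subtractions $D$ performs when executing a legal sequence of $m$ operations starting from $F$ with zero weights, maximized over operation sequences. *)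

From HB Require Import structures.
From mathcomp Require Import all_boot all_algebra.
From Stdlib Require Import ClassicalEpsilon.
Set Implicit Arguments. Unset Strict Implicit. Unset Printing Implicit Defensive.
Import GRing.Theory.

Section Defs.
Variable V : finType.

(* A rooted forest: a vertex set and a parent map (None = root). *)
Record rforest := RForest { fverts : {set V}; fpar : V -> option V }.

(* Well-formedness: parents stay in the vertex set, and following parents
   from any vertex eventually reaches a root (no cycles). *)
Definition is_rforest (F : rforest) : Prop :=
  (forall u p, u \in fverts F -> fpar F u = Some p -> p \in fverts F) /\
  (forall u, u \in fverts F ->
     exists n, iter n (fun o => obind (fpar F) o) (Some u) = None).

Definition fedge (F : rforest) : rel V := fun a b =>
  [&& a \in fverts F, b \in fverts F &
      (fpar F a == Some b) || (fpar F b == Some a)].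

Definition fconnected (F : rforest) (u v : V) : bool := connect (fedge F) u v.

Definition induced (F : rforest) (U : {set V}) : rforest :=
  RForest (fverts F :&: U)
    (fun u => if u \in U then
                match fpar F u with
                | Some p => if p \in U then Some p else None
                | None => None end
              else None).

Definition convex (F : rforest) (U : {set V}) : Prop :=
  forall u v, u \in U -> v \in U -> fconnected F u v -> fconnected (induced F U) u v.

(* Operations (the value x of update-weight(v,x) is supplied separately). *)
Inductive op := Cut of V | Upd of V | Query of V.

Definition is_cut (u : V) (o : op) : bool := if o is Cut w then w == u else false.

Definition cur (F : rforest) (s : seq op) (t : nat) : rforest :=
  RForest (fverts F) (fun u => if has (is_cut u) (take t s) then None else fpar F u).

Definition legal (F : rforest) (s : seq op) : Prop :=
  forall t, match onth s t with
            | Some (Cut v) => v \in fverts F /\ fpar (cur F s t) v <> None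
            | Some (Upd v) | Some (Query v) => v \in fverts F
            | None => True
            end.

(* Only IAdd/ISub
   (group additions/subtractions) are charged; copying, zeroing and reading the
   argument x of the current update-weight are free. *)
Inductive instr :=
| IAdd of nat & nat & nat
| ISub of nat & nat & nat
| ICopy of nat & nat
| IZero of nat
| IInput of nat.            (* c := x (argument of current update-weight) *)

Definition cost_instr (i : instr) : nat :=
  match i with IAdd _ _ _ | ISub _ _ _ => 1 | _ => 0 end.

Definition setm (G : zmodType) (m : nat -> G) (c : nat) (y : G) : nat -> G :=
  fun k => if k == c then y else m k.

Definition exec (G : zmodType) (x : G) (m : nat -> G) (i : instr) : nat -> G :=
  match i with
  | IAdd a b c => setm m c (m a + m b)%R
  | ISub a b c => setm m c (m a - m b)%R
  | ICopy a c => setm m c (m a)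
  | IZero c => setm m c 0%R
  | IInput c => setm m c x
  end.

(* A deterministic online data structure in the group model (for a fixed
   initial forest F): on the history of operations so far (the last one being
   the current operation) it runs a straight-line program on its memory and,
   for a query, returns the index of the cell holding the answer.  Its control
   flow cannot depend on group values. *)
Definition ds := seq op -> seq instr * nat.

Definition input (G : zmodType) (s : seq op) (xs : nat -> G) (t : nat) : G :=
  match onth s t with Some (Upd _) => xs t | _ => 0%R end.

(* memory after executing the first t operations; initially all cells hold 0
   (all initial weights are zero) *)
Fixpoint memAt (G : zmodType) (D : ds) (s : seq op) (xs : nat -> G) (t : nat)
  : nat -> G :=
  match t with
  | 0 => fun _ => 0%R
  | t'.+1 => foldl (exec (input s xs t')) (memAt D s xs t') (D (take t'.+1 s)).1
  end.

Fixpoint weight (G : zmodType) (s : seq op) (xs : nat -> G) (t : nat) (u : V) : G :=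
  match t with
  | 0 => 0%R
  | t'.+1 => match onth s t' with
             | Some (Upd v) => if v == u then xs t' else weight s xs t' u
             | _ => weight s xs t' u
             end
  end.

Definition treesum (G : zmodType) (F : rforest) (s : seq op) (xs : nat -> G)
  (t : nat) (v : V) : G :=
  (\sum_(u in fverts F | fconnected (cur F s t) u v) weight s xs t u)%R.

Definition correct (F : rforest) (D : ds) : Prop :=
  forall (G : zmodType) (s : seq op), legal F s ->
  forall (xs : nat -> G) (t : nat) (v : V), onth s t = Some (Query v) ->
    memAt D s xs t.+1 (D (take t.+1 s)).2 = treesum F s xs t v.

Definition cost (D : ds) (s : seq op) : nat :=
  \sum_(t < size s) sumn (map cost_instr (D (take t.+1 s)).1).

Definition worst_le (F : rforest) (D : ds) (m k : nat) : Prop :=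
  forall s, legal F s -> size s = m -> cost D s <= k.

Definition OPTZ (F : rforest) (m : nat) : nat :=
  epsilon (inhabits 0)
    (fun k => (exists D, correct F D /\ worst_le F D m k) /\
              forall k', (exists D, correct F D /\ worst_le F D m k') -> k <= k').

End Defs.

From mathcomp Require Import all_boot all_algebra.
From Stdlib Require Import Classical ClassicalEpsilon FunctionalExtensionality Wf_nat.
Set Implicit Arguments. Unset Strict Implicit. Unset Printing Implicit Defensive.
Import GRing.Theory.

(* Take a structure D that is optimal for F and m1 + m2 operations.  It is
   also correct for F[U1], so some legal sequence s1 of at most m1 operations
   on U1 costs it at least OPTZ(F[U1], m1).  Replay s1 with all update values
   0: the memory stays identically 0, and the cuts of s1 delete edges inside
   U1 only.  Convexity survives edge deletions in a forest (two vertices are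
   joined through their lowest common ancestor), so in the current forest the
   tree of a vertex of U2 meets U2 exactly in its tree in the current F[U2],
   and the other weights are 0.  Hence D continued after s1 is correct for
   F[U2], and some s2 of at most m2 operations costs it at least
   OPTZ(F[U2], m2).  Finally s1 ++ s2, padded with queries, is legal for F. *)

Section Climb.
Variable V : finType.
Implicit Types (p q r : V -> option V) (o : option V).

Definition climb p n o := iter n (obind p) o.

Definition subpar p q := forall y z, p y = Some z -> q y = Some z.

Lemma climb_None p n : climb p n None = None.
Proof. by elim: n => //= n; rewrite /climb /= => ->. Qed.

Lemma climbD p n m o : climb p (n + m) o = climb p n (climb p m o).
Proof. exact: iterD. Qed.

Lemma climbS p n o : climb p n.+1 o = obind p (climb p n o).
Proof. by []. Qed.

Lemma climb_subpar p q n o x : subpar p q -> climb p n o = Some x -> climb q n o = Some x.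
Proof.
move=> pq; elim: n x => [|n IH] x //.
rewrite !climbS; case E: (climb p n o) => [y|] //= hy.
by rewrite (IH _ E) /=; apply: pq.
Qed.

Lemma climb_prefix p n k o : k <= n -> climb p n o <> None -> climb p k o <> None.
Proof.
by move=> kn; rewrite -(subnK kn) climbD => h e; apply: h; rewrite e climb_None.
Qed.

Lemma climb_subpar_prefix p q n k o : subpar p q -> k <= n -> climb p n o <> None ->
  climb p k o = climb q k o.
Proof.
move=> pq kn /(climb_prefix kn).
by case E: (climb p k o) => [y|] // _; rewrite (climb_subpar pq E).
Qed.

(* Two restrictions [p], [r] of the same parent map agree wherever both are
   defined, so climbing along both is climbing along their intersection. *)
Lemma climb_meet p r q pr n o x : subpar p q -> subpar r q ->
  (forall y z, pr y = Some z <-> p y = Some z /\ r y = Some z) ->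
  climb p n o = Some x -> climb r n o = Some x -> climb pr n o = Some x.
Proof.
move=> pq rq prE; elim: n x => [|n IH] x //.
rewrite !climbS; case Ep: (climb p n o) => [y|] //= hp.
case Er: (climb r n o) => [y'|] //= hr.
have [ey] : Some y = Some y' by rewrite -(climb_subpar pq Ep) (climb_subpar rq Er).
rewrite -ey in Er hr; rewrite (IH _ Ep Er) /=; exact/prE.
Qed.

End Climb.

Section Forest.
Variable V : finType.
Implicit Types (F H : rforest V) (U : {set V}) (s : seq (op V)).

Definition par_closed H :=
  forall u p, u \in fverts H -> fpar H u = Some p -> p \in fverts H.

Definition common_ancestor (p : V -> option V) (u v : V) := exists i j x,
  climb p i (Some u) = Some x /\ climb p j (Some v) = Some x.

Lemma fedge_sym H : symmetric (fedge H).
Proof. by move=> a b; rewrite /fedge andbCA orbC. Qed.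

Lemma connect_fedge_verts H u v : connect (fedge H) u v -> u != v -> u \in fverts H.
Proof.
by case/connectP=> [[|b pth] /= hp ->]; [rewrite eqxx | case/andP: hp => /and3P[]].
Qed.

Lemma connect_climb H u n x : par_closed H -> u \in fverts H ->
  climb (fpar H) n (Some u) = Some x -> connect (fedge H) u x /\ x \in fverts H.
Proof.
move=> cH uH; elim: n x => [|n IH] x; first by case=> <-.
rewrite climbS; case E: (climb _ _ _) => [y|] //= hy.
have [cy yH] := IH y E; have xH := cH _ _ yH hy.
split=> //; apply: connect_trans cy (connect1 _).
by rewrite /fedge yH xH hy eqxx.
Qed.

Lemma common_ancestor_connect H u v : par_closed H ->
  u \in fverts H -> v \in fverts H -> common_ancestor (fpar H) u v ->
  connect (fedge H) u v.
Proof.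
move=> cH uH vH [i [j [x [hu hv]]]].
have [cu _] := connect_climb cH uH hu; have [cv _] := connect_climb cH vH hv.
by apply: connect_trans cu _; rewrite (sym_connect_sym (fedge_sym H)).
Qed.

Lemma common_ancestor_trans (p : V -> option V) a b c :
  common_ancestor p a b -> common_ancestor p b c -> common_ancestor p a c.
Proof.
move=> [i [j [x [ha hb]]]] [j' [k [y [hb' hc]]]].
case: (leqP j j') => hjj.
  exists (j' - j + i), k, y; split=> //.
  by rewrite climbD ha -hb -climbD subnK.
exists i, (j - j' + k), x; split=> //.
by rewrite climbD hc -hb' -climbD subnK // ltnW.
Qed.

Lemma connect_common_ancestor H u v :
  connect (fedge H) u v -> common_ancestor (fpar H) u v.
Proof.
case/connectP=> pth + ->; elim: pth u => [|b pth IH] u /=.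
  by move=> _; exists 0, 0, u.
case/andP=> e /IH; apply: common_ancestor_trans.
case/and3P: e => _ _ /orP[/eqP h|/eqP h].
  by exists 1, 0, b; rewrite /climb /= h.
by exists 0, 1, u; rewrite /climb /= h.
Qed.

Lemma climb_acyclic F x n : is_rforest F -> x \in fverts F -> 0 < n ->
  climb (fpar F) n (Some x) <> Some x.
Proof.
move=> [_ hF] xF n0 hx; have [N hN] := hF x xF.
have hq q : climb (fpar F) (q * n) (Some x) = Some x.
  by elim: q => [|q IH] //; rewrite mulSn climbD IH hx.
have := hq N; rewrite -(subnK (leq_pmulr N n0)) climbD.
by rewrite /climb in hN *; rewrite hN -/(climb _ _ None) climb_None.
Qed.

(* In a forest the common ancestors of [u] and [v] form a chain, climbed
   through in the same order from [u] and from [v]. *)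
Lemma common_ancestor_order F u v i j i' j' x y :
  is_rforest F -> x \in fverts F ->
  climb (fpar F) i (Some u) = Some x -> climb (fpar F) j (Some v) = Some x ->
  climb (fpar F) i' (Some u) = Some y -> climb (fpar F) j' (Some v) = Some y ->
  i <= i' -> j <= j'.
Proof.
move=> hF xF hu hv hu' hv' ii; rewrite leqNgt; apply/negP => jj.
have hxy : climb (fpar F) (i' - i) (Some x) = Some y by rewrite -hu -climbD subnK.
have hyx : climb (fpar F) (j - j') (Some y) = Some x.
  by rewrite -hv' -climbD subnK // ltnW.
apply: (climb_acyclic hF xF (n := j - j' + (i' - i))).
  by rewrite addn_gt0 subn_gt0 jj.
by rewrite climbD hxy hyx.
Qed.

Lemma lowest_common_ancestor F u v i j i' j' x y :
  is_rforest F -> u \in fverts F ->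
  climb (fpar F) i (Some u) = Some x -> climb (fpar F) j (Some v) = Some x ->
  climb (fpar F) i' (Some u) = Some y -> climb (fpar F) j' (Some v) = Some y ->
  exists a b w, [/\ a <= minn i i', b <= minn j j',
    climb (fpar F) a (Some u) = Some w & climb (fpar F) b (Some v) = Some w].
Proof.
move=> hF uF hu hv hu' hv'.
have [_ xF] := connect_climb hF.1 uF hu; have [_ yF] := connect_climb hF.1 uF hu'.
case: (leqP i i') => ii.
  have jj := common_ancestor_order hF xF hu hv hu' hv' ii.
  by exists i, j, x; rewrite leq_min !leqnn jj.
have jj := common_ancestor_order hF yF hu' hv' hu hv (ltnW ii).
by exists i', j', y; rewrite leq_min !leqnn jj.
Qed.

Lemma par_closed_subpar F H : par_closed F -> fverts H = fverts F ->
  subpar (fpar H) (fpar F) -> par_closed H.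
Proof. by move=> cF eV sub u p; rewrite eV => uF /sub; apply: cF. Qed.

Lemma par_closed_induced H U : par_closed H -> par_closed (induced H U).
Proof.
move=> cH u p; rewrite /= inE => /andP[uH ->].
case E: (fpar H u) => [q|] //; case: ifP => // qU [<-].
by rewrite inE qU (cH _ _ uH E).
Qed.

Lemma induced_subpar H U : subpar (fpar (induced H U)) (fpar H).
Proof. by move=> y z /=; case: (y \in U) => //; case: (fpar H y) => // q; case: ifP. Qed.

Lemma induced_par_meet F H U : subpar (fpar H) (fpar F) -> forall y z,
  fpar (induced H U) y = Some z <->
  fpar H y = Some z /\ fpar (induced F U) y = Some z.
Proof.
move=> sub y z /=; case: (y \in U); last by split=> // -[].
case E: (fpar H y) => [q|]; last by split=> // -[].
rewrite (sub _ _ E); case: (q \in U); by split=> // -[].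
Qed.

Lemma convex_subforest F H U : is_rforest F -> fverts H = fverts F ->
  subpar (fpar H) (fpar F) -> convex F U -> convex H U.
Proof.
move=> hF eV sub cvx u v uU vU; rewrite /fconnected.
case: (eqVneq u v) => [-> _ | uv cH]; first exact: connect0.
have uF : u \in fverts F by rewrite -eV (connect_fedge_verts cH uv).
have vF : v \in fverts F.
  rewrite -eV (@connect_fedge_verts H v u) 1?eq_sym //.
  by rewrite (sym_connect_sym (fedge_sym H)).
have [i [j [x [hu hv]]]] := connect_common_ancestor cH.
have cF : fconnected F u v.
  apply: common_ancestor_connect hF.1 uF vF _.
  by exists i, j, x; rewrite (climb_subpar sub hu) (climb_subpar sub hv).
have [i' [j' [y [hu' hv']]]] := connect_common_ancestor (cvx u v uU vU cF).
(* The lower of the two common ancestors is reached from [u] and [v] along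
   edges that lie both in [H] and in [F[U]]. *)
have [a [b [w []]]] := lowest_common_ancestor hF uF (climb_subpar sub hu)
  (climb_subpar sub hv) (climb_subpar (@induced_subpar F U) hu')
  (climb_subpar (@induced_subpar F U) hv').
rewrite !leq_min => /andP[ai ai'] /andP[bj bj'] hua hvb.
have cHU := par_closed_induced (U := U) (par_closed_subpar hF.1 eV sub).
apply: common_ancestor_connect cHU _ _ _; rewrite ?inE ?eV ?uF ?uU ?vF ?vU //.
exists a, b, w; split;
  apply: (climb_meet sub (@induced_subpar F U) (induced_par_meet U sub)).
- by rewrite (climb_subpar_prefix sub ai) ?hu.
- by rewrite (climb_subpar_prefix (@induced_subpar F U) ai') ?hu'.
- by rewrite (climb_subpar_prefix sub bj) ?hv.
- by rewrite (climb_subpar_prefix (@induced_subpar F U) bj') ?hv'.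
Qed.

Lemma cur_subpar F s t : subpar (fpar (cur F s t)) (fpar F).
Proof. by move=> y z /=; case: has. Qed.

Lemma convex_cur F U s t : is_rforest F -> convex F U -> convex (cur F s t) U.
Proof. by move=> hF; apply: convex_subforest hF _ (@cur_subpar F s t). Qed.

Lemma fedge_induced_sub H U : subrel (fedge (induced H U)) (fedge H).
Proof.
move=> a b; rewrite /fedge /= !inE => /and3P[/andP[-> _] /andP[-> _]] /=.
by case/orP=> /eqP /induced_subpar ->; rewrite eqxx ?orbT.
Qed.

Lemma fconnected_induced H U u v : convex H U -> u \in U -> v \in U ->
  fconnected (induced H U) u v = fconnected H u v.
Proof.
move=> cvx uU vU; apply/idP/idP; last exact: cvx.
by apply: connect_sub => a b /fedge_induced_sub e; apply: connect1.
Qed.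

End Forest.

Section Replay.
Variable V : finType.
Implicit Types (F : rforest V) (U Ua Ub : {set V}) (s : seq (op V)) (D : ds V).

Definition after D s1 : ds V := fun h => D (s1 ++ h).

Definition shift_values (G : zmodType) s1 (xs : nat -> G) : nat -> G :=
  fun n => if n < size s1 then 0%R else xs (n - size s1).

(* [legal F s] unfolds to [forall t, legal_at F s t]. *)
Definition legal_at F s t : Prop :=
  match onth s t with
  | Some (Cut v) => v \in fverts F /\ fpar (cur F s t) v <> None
  | Some (Upd v) | Some (Query v) => v \in fverts F
  | None => True
  end.

Lemma take_cat_addn s1 s t : take (size s1 + t) (s1 ++ s) = s1 ++ take t s.
Proof. by rewrite take_cat ltnNge leq_addr /= addKn. Qed.

Lemma onth_cat_addn s1 s t : onth (s1 ++ s) (size s1 + t) = onth s t.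
Proof. by rewrite onth_cat ltnNge leq_addr /= addKn. Qed.

Lemma shift_values_prefix (G : zmodType) s1 (xs : nat -> G) n :
  n < size s1 -> shift_values s1 xs n = 0%R.
Proof. by rewrite /shift_values => ->. Qed.

Lemma shift_values_addn (G : zmodType) s1 (xs : nat -> G) t :
  shift_values s1 xs (size s1 + t) = xs t.
Proof. by rewrite /shift_values ltnNge leq_addr /= addKn. Qed.

Lemma weight_after (G : zmodType) s1 s (xs : nat -> G) t u :
  weight (s1 ++ s) (shift_values s1 xs) (size s1 + t) u = weight s xs t u.
Proof.
have W0 n : n <= size s1 -> weight (s1 ++ s) (shift_values s1 xs) n u = 0%R.
  elim: n => [|n IH] // hn /=.
  case: onth => [[w|w|w]|]; rewrite ?IH ?(ltnW hn) //.
  by case: ifP => _; rewrite ?shift_values_prefix ?IH ?(ltnW hn).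
elim: t => [|t IH]; first by rewrite addn0 W0.
rewrite addnS /= onth_cat_addn.
by case: onth => [[w|w|w]|]; rewrite IH ?shift_values_addn.
Qed.

Lemma input_after (G : zmodType) s1 s (xs : nat -> G) t :
  input (s1 ++ s) (shift_values s1 xs) (size s1 + t) = input s xs t.
Proof.
by rewrite /input onth_cat_addn; case: onth => [[w|w|w]|] //; rewrite shift_values_addn.
Qed.

Lemma input_prefix (G : zmodType) s1 s (xs : nat -> G) n : n < size s1 ->
  input (s1 ++ s) (shift_values s1 xs) n = 0%R.
Proof.
by move=> hn; rewrite /input; case: onth => [[w|w|w]|] //; rewrite shift_values_prefix.
Qed.

Lemma exec_zero (G : zmodType) (l : seq instr) :
  foldl (exec (0 : G)) (fun _ => 0%R) l = (fun _ => 0%R).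
Proof.
elim: l => [|i l IH] //=; rewrite -[RHS]IH; congr foldl.
apply: functional_extensionality => k.
by case: i => *; rewrite /= /setm; case: ifP; rewrite ?addr0 ?subr0.
Qed.

(* Replayed with all update values 0, the prefix [s1] leaves the memory
   identically 0, which is exactly the initial memory of [after D s1]. *)
Lemma memAt_after (G : zmodType) D s1 s (xs : nat -> G) t :
  memAt D (s1 ++ s) (shift_values s1 xs) (size s1 + t) = memAt (after D s1) s xs t.
Proof.
have M0 n : n <= size s1 -> memAt D (s1 ++ s) (shift_values s1 xs) n = (fun _ => 0%R).
  by elim: n => [|n IH] // hn /=; rewrite IH ?(ltnW hn) // input_prefix // exec_zero.
elim: t => [|t IH]; first by rewrite addn0 M0.
by rewrite addnS /= IH input_after -addnS take_cat_addn.
Qed.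

Lemma cur_induced_subpar F U s t :
  subpar (fpar (cur (induced F U) s t)) (fpar (cur F s t)).
Proof. by move=> y z /=; case: has => //; exact: (@induced_subpar _ F U y z). Qed.

Lemma legal_at_induced F U s s' t t' : onth s' t' = onth s t ->
  (forall w, w \in U -> fpar (cur F s t) w = fpar (cur F s' t') w) ->
  legal_at (induced F U) s t -> legal_at F s' t'.
Proof.
rewrite /legal_at => -> ecur; case: onth => [[w|w|w]|] //; rewrite inE;
  try by case/andP.
case=> /andP[wF wU] hp; split=> //; rewrite -ecur //.
by move: hp; case E: (fpar _ w) => [z|] // _; rewrite (cur_induced_subpar E).
Qed.

Lemma legal_no_cut_outside F U s w :
  legal (induced F U) s -> w \notin U -> ~~ has (is_cut w) s.
Proof.
move=> ls wU; apply/(has_nthP (Cut w)) => -[k hk].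
have := ls k; rewrite (onthE s k) (nth_map (Cut w)) //.
by case: nth => // w' [+ _] /eqP ew; rewrite ew inE (negbTE wU) andbF.
Qed.

Lemma cur_cat_par F s1 s t w : ~~ has (is_cut w) s1 ->
  fpar (cur F (s1 ++ s) (size s1 + t)) w = fpar (cur F s t) w.
Proof. by move=> hw; rewrite /= take_cat_addn has_cat (negbTE hw). Qed.

Lemma legal_cat F Ua Ub s1 s : [disjoint Ua & Ub] ->
  legal (induced F Ua) s1 -> legal (induced F Ub) s -> legal F (s1 ++ s).
Proof.
move=> dis l1 l2 T; case: (ltnP T (size s1)) => hT.
  apply: (legal_at_induced _ _ (l1 T)); first by rewrite onth_cat hT.
  by move=> w _; rewrite /= takel_cat // ltnW.
rewrite -(subnKC hT); apply: (legal_at_induced _ _ (l2 (T - size s1))).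
  exact: onth_cat_addn.
move=> w wU; rewrite cur_cat_par //.
by apply: legal_no_cut_outside l1 _; rewrite (disjointFl dis wU).
Qed.

Lemma weight_outside (G : zmodType) F U s (xs : nat -> G) t u :
  legal (induced F U) s -> u \notin U -> weight s xs t u = 0%R.
Proof.
move=> ls uU; elim: t => [|t IH] //=.
case E: onth => [[w|w|w]|] //; case: eqP => // ew; subst w.
by have := ls t; rewrite E inE (negbTE uU) andbF.
Qed.

Lemma induced_cur_cat F Ua Ub s1 s t : [disjoint Ua & Ub] ->
  legal (induced F Ua) s1 ->
  induced (cur F (s1 ++ s) (size s1 + t)) Ub = cur (induced F Ub) s t.
Proof.
move=> dis l1; congr RForest; apply: functional_extensionality => w /=.
case: (boolP (w \in Ub)) => wU; last by case: has.
have nc : ~~ has (is_cut w) s1.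
  by apply: legal_no_cut_outside l1 _; rewrite (disjointFl dis wU).
by rewrite take_cat_addn has_cat (negbTE nc) /=; case: has.
Qed.

Lemma treesum_after (G : zmodType) F Ua Ub s1 s (xs : nat -> G) t v :
  is_rforest F -> convex F Ub -> [disjoint Ua & Ub] ->
  legal (induced F Ua) s1 -> legal (induced F Ub) s -> v \in Ub ->
  treesum F (s1 ++ s) (shift_values s1 xs) (size s1 + t) v =
  treesum (induced F Ub) s xs t v.
Proof.
move=> hF cvx dis l1 ls vU; rewrite /treesum.
under eq_bigr do rewrite weight_after.
rewrite (bigID (mem Ub)) /= [X in (_ + X)%R]big1 ?addr0; last first.
  by move=> u /andP[_ uU]; apply: weight_outside ls uU.
apply: eq_bigl => u; rewrite inE.
case: (boolP (u \in fverts F)) => //= uF; case: (boolP (u \in Ub)) => uU;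
  rewrite ?andbF // andbT.
have cvx' := convex_cur (s := s1 ++ s) (t := size s1 + t) hF cvx.
by rewrite -(fconnected_induced cvx' uU vU) (induced_cur_cat _ _ dis l1).
Qed.

Lemma correct_after F Ua Ub s1 D : is_rforest F -> convex F Ub ->
  [disjoint Ua & Ub] -> correct F D -> legal (induced F Ua) s1 ->
  correct (induced F Ub) (after D s1).
Proof.
move=> hF cvx dis cD l1 G s ls xs t v hq.
have vU : v \in Ub by have := ls t; rewrite hq inE => /andP[].
have := cD G _ (legal_cat dis l1 ls) (shift_values s1 xs) (size s1 + t) v.
rewrite onth_cat_addn -addnS memAt_after take_cat_addn => /(_ hq) ->.
exact: (treesum_after xs t hF cvx dis l1 ls vU).
Qed.

End Replay.

Section Optimum.
Variable V : finType.
Implicit Types (F : rforest V) (s : seq (op V)) (D : ds V).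

Lemma legal_nil F : legal F [::].
Proof. by move=> t; rewrite /legal onth0n. Qed.

Lemma legal_pad F s v0 n : legal F s -> v0 \in fverts F ->
  legal F (s ++ nseq n (Query v0)).
Proof.
move=> ls v0F t; rewrite onth_cat; case: ltnP => ht.
  have := ls t; case: onth => [[w|w|w]|] //.
  by move=> [wF hp]; split=> //; rewrite /= takel_cat // ltnW.
by rewrite onth_nseq; case: ifP.
Qed.

Lemma cost_cat D s1 s2 : cost D (s1 ++ s2) = cost D s1 + cost (after D s1) s2.
Proof.
rewrite /cost size_cat big_split_ord /=; congr (_ + _); apply: eq_bigr => i _.
  by rewrite takel_cat.
by rewrite /= -addnS take_cat_addn.
Qed.

(* Short sequences are padded with queries; a legal nonempty sequence
   provides the vertex to query. *)
Lemma cost_le_worst F D m k s : worst_le F D m k -> legal F s -> size s <= m ->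
  cost D s <= k.
Proof.
move=> wD ls sm; case: s ls sm => [|o r] ls sm; first by rewrite /cost big_ord0.
have [v0 v0F] : exists v0, v0 \in fverts F.
  move: (ls 0) => /=; case: o {ls sm} => w;
    [case=> wF _ | move=> wF | move=> wF]; by exists w.
have lp := legal_pad (m - size (o :: r)) ls v0F.
apply: leq_trans (wD _ lp _); first by rewrite cost_cat leq_addr.
by rewrite size_cat size_nseq subnKC.
Qed.

Definition cell (u : V) : nat := enum_rank u.

Definition out_cell : nat := #|V|.

Lemma cell_inj : injective cell.
Proof. by move=> a b /val_inj /enum_rank_inj. Qed.

Lemma cell_out u : (cell u == out_cell) = false.
Proof. by apply/negbTE; rewrite neq_ltn /cell /out_cell ltn_ord. Qed.

Definition tree_of F s v : pred V :=
  [pred u | (u \in fverts F) && fconnected (cur F s (size s)) u v].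

Definition add_cells (l : seq V) : seq instr :=
  [seq IAdd out_cell (cell u) out_cell | u <- l].

(* Cell [cell u] stores the weight of [u]; a query sums its tree into
   [out_cell]. *)
Definition naive F : ds V := fun h =>
  match rev h with
  | Query v :: r => (IZero out_cell :: add_cells (enum (tree_of F (rev r) v)), out_cell)
  | Upd v :: _ => ([:: IInput (cell v)], 0)
  | _ => ([::], 0)
  end.

Lemma exec_add_cells (G : zmodType) (x : G) (l : seq V) (m : nat -> G) :
  (forall k, k != out_cell -> foldl (exec x) m (add_cells l) k = m k) /\
  foldl (exec x) m (add_cells l) out_cell = (m out_cell + \sum_(u <- l) m (cell u))%R.
Proof.
elim: l m => [|a l IH] m /=; first by rewrite big_nil addr0.
have [IH1 IH2] := IH (exec x m (IAdd out_cell (cell a) out_cell)).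
split; first by move=> k hk; rewrite IH1 // /= /setm (negbTE hk).
rewrite IH2 big_cons /= /setm eqxx addrA.
by under eq_bigr do rewrite cell_out.
Qed.

Lemma cost_add_cells (l : seq V) : sumn (map cost_instr (add_cells l)) = size l.
Proof. by elim: l => //= a l ->. Qed.

Lemma take_onth s t o : onth s t = Some o -> take t.+1 s = rcons (take t s) o.
Proof.
move=> h; have ht : t < size s by rewrite -onthTE h.
by rewrite (take_nth o ht); congr rcons; exact: onth_nth h.
Qed.

Lemma naive_cells F (G : zmodType) s (xs : nat -> G) t : t <= size s ->
  forall u, memAt (naive F) s xs t (cell u) = weight s xs t u.
Proof.
elim: t => [|t IH] ht u //.
have hon : onth s t = Some (nth (Query u) s t) by rewrite onthE (nth_map (Query u)).
rewrite /= hon (take_onth hon) /naive rev_rcons.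
case: (nth (Query u) s t) hon => w hon /=.
- exact: IH (ltnW ht) u.
- rewrite /setm /input hon (inj_eq cell_inj) eq_sym.
  by case: eqP => // _; apply: IH (ltnW ht) u.
- have [other _] := exec_add_cells (input s xs t)
                     (enum (tree_of F (rev (rev (take t s))) w))
                     (setm (memAt (naive F) s xs t) out_cell 0%R).
  by rewrite other ?cell_out // /setm cell_out; apply: IH (ltnW ht) u.
Qed.

Lemma naive_correct F : correct F (naive F).
Proof.
move=> G s _ xs t v hq.
have ht : t < size s by rewrite -onthTE hq.
rewrite /= (take_onth hq) /naive rev_rcons /= revK.
have [_ ->] := exec_add_cells (input s xs t) (enum (tree_of F (take t s) v))
                 (setm (memAt (naive F) s xs t) out_cell 0%R).
rewrite /setm eqxx add0r.
under eq_bigr do rewrite cell_out naive_cells ?(ltnW ht) //.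
rewrite big_enum /treesum; apply: eq_bigl => u.
by rewrite unfold_in /cur take_size.
Qed.

Lemma naive_worst F m : worst_le F (naive F) m (m * #|V|).
Proof.
move=> s _ <-; rewrite /cost.
apply: (@leq_trans (\sum_(t < size s) #|V|)); last by rewrite sum_nat_const card_ord.
apply: leq_sum => t _; rewrite /naive; case: (rev _) => [|[w|w|w] r] //=.
by rewrite cost_add_cells -cardE max_card.
Qed.

Lemma OPTZ_spec F m :
  (exists D, correct F D /\ worst_le F D m (OPTZ F m)) /\
  (forall k, (exists D, correct F D /\ worst_le F D m k) -> OPTZ F m <= k).
Proof.
rewrite /OPTZ; apply: (epsilon_spec (inhabits 0) (fun k =>
  (exists D, correct F D /\ worst_le F D m k) /\
  forall k', (exists D, correct F D /\ worst_le F D m k') -> k <= k')).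
have [k [[Pk least] _]] := dec_inh_nat_subset_has_unique_least_element
  (fun k => exists D, correct F D /\ worst_le F D m k) (fun n => classic _)
  (ex_intro _ (m * #|V|)
    (ex_intro _ (naive F) (conj (@naive_correct F) (@naive_worst F m)))).
by exists k; split=> // k' /least /leP.
Qed.

Lemma OPTZ_le_cost F m D : correct F D ->
  exists s, [/\ legal F s, size s <= m & OPTZ F m <= cost D s].
Proof.
move=> cD; have [_ least] := OPTZ_spec F m.
case: (posnP (OPTZ F m)) => [-> | pos].
  by exists [::]; split=> //; apply: legal_nil.
apply: NNPP => none; suff : OPTZ F m <= (OPTZ F m).-1 by rewrite leqNgt ltn_predL pos.
apply: least; exists D; split=> // s ls sz; rewrite -ltnS prednK // ltnNge.
by apply/negP => c; apply: none; exists s; rewrite sz.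
Qed.

End Optimum.

Theorem lemma20 (V : finType) (F : rforest V) (U1 U2 : {set V}) (m1 m2 : nat) :
  is_rforest F ->
  U1 :&: U2 = set0 -> U1 :|: U2 = fverts F ->
  convex F U1 -> convex F U2 ->
  OPTZ (induced F U1) m1 + OPTZ (induced F U2) m2 <= OPTZ F (m1 + m2).
Proof.
move=> hF dis _ cv1 cv2.
have dis12 : [disjoint U1 & U2] by rewrite -setI_eq0 dis.
have dis21 : [disjoint U2 & U1] by rewrite disjoint_sym.
have [[D [cD wD]] _] := OPTZ_spec F (m1 + m2).
have [s1 [l1 sz1 c1]] := OPTZ_le_cost m1 (correct_after hF cv1 dis21 cD (legal_nil _)).
have [s2 [l2 sz2 c2]] := OPTZ_le_cost m2 (correct_after hF cv2 dis12 cD l1).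
apply: leq_trans (cost_le_worst wD (legal_cat dis12 l1 l2) _).
  by rewrite cost_cat; apply: leq_add c1 c2.
by rewrite size_cat; apply: leq_add sz1 sz2.
Qed.
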